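(* Suppose Assumption 1 holds with $\alpha\in(0,1]$ and let $(f_t)_{t\in\mathbb N}$ be the online gradient descent iterates with step sizes satisfying $\eta_t\le\frac{1}{A\kappa^2}$ for all $t\in\mathbb N$. Set $\eta_0:=1$ and $$C_1=\|f_H\|^2+A^{-1}B+2\max\Big\{\sup_{y\in\mathcal Y}\phi(y,0),\ \sup_{(x,y)\in\mathcal Z}\phi(y,f_H(x))\Big\}.$$ Then for every $t\in\mathbb N$ and every realization of $z_1,z_2,\dots$, $$\|f_{t+1}-f_H\|^2\le C_1\sum_{k=0}^t\eta_k\qquad\text{and}\qquad\|f_{t+1}\|^2\le C_1\sum_{k=1}^t\eta_k.$$ If moreover $\eta_{t+1}\le\eta_t$ for all $t\in\mathbb N$, then for every $t\in\mathbb N$, $$\sum_{k=1}^t\eta_k^2\,\phi(y_k,f_k(x_k))\le\eta_1\|f_H\|^2+C_2\sum_{k=1}^t\eta_k^2,\qquad C_2=2\sup_{(x,y)\in\mathcal Z}\phi(y,f_H(x))+\eta_1\kappa^2B.$$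
   Context: Setting: Let $\mathcal X\subset\mathbb R^d$, $\mathcal Y\subset\mathbb R$, $\mathcal Z=\mathcal X\times\mathcal Y$, and let $\rho$ be a Borel probability measure on $\mathcal Z$. Let $K:\mathcal X\times\mathcal X\to\mathbb R$ be a continuous, symmetric, positive semi-definite kernel with reproducing kernel Hilbert space $H_K$ (inner product $\langle\cdot,\cdot\rangle$, norm $\|\cdot\|$), $K_x:=K(x,\cdot)$, reproducing property $f(x)=\langle f,K_x\rangle$, and $\kappa:=\sup_{x\in\mathcal X}\sqrt{K(x,x)}<\infty$. Let $\phi:\mathcal Y\times\mathbb R\to[0,\infty)$ be a loss function, differentiable in its second argument, and write $\phi'(y,s)$ for its derivative with respect to $s$. The generalization error of $f:\mathcal X\to\mathbb R$ is $\mathcal E(f)=\int_{\mathcal Z}\phi(y,f(x))\,d\rho(x,y)$. It is assumed that a minimizer $f_H\in\arg\min_{f\in H_K}\mathcal E(f)$ exists and that $\max\{\sup_{y\in\mathcal Y}\phi(y,0),\ \sup_{(x,y)\in\mathcal Z}\phi(y,f_H(x))\}<\infty$. Let $z_t=(x_t,y_t)$, $t\in\mathbb N$, be i.i.d. samples from $\rho$, let $(\eta_t)_{t\in\mathbb N}$ be positive step sizes, and define the online gradient descent iterates by $f_1=0$ and $f_{t+1}=f_t-\eta_t\phi'(y_t,f_t(x_t))K_{x_t}$ for $t\in\mathbb N$ (so $f_t$ depends only on $z_1,\dots,z_{t-1}$). Assumption 1: for every $y\in\mathcal Y$, $\phi(y,\cdot)$ is convex and differentiable, and there are constants $\alpha\in(0,1]$,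 $L>0$ with $|\phi'(y,s)-\phi'(y,\tilde s)|\le L|s-\tilde s|^{\alpha}$ for all $s,\tilde s\in\mathbb R$, $y\in\mathcal Y$. Constants: $A=2\alpha^{\frac{1-\alpha}{1+\alpha}}L^{\frac{2}{1+\alpha}}(1+\alpha)$ and $B=\alpha^{-\frac{2\alpha}{1+\alpha}}L^{\frac{2}{1+\alpha}}(1-\alpha^2)$. *)

From Stdlib Require Import Reals Lra.
Open Scope R_scope.

Record Hilbert := {
  car :> Type;
  hzero : car;
  hadd : car -> car -> car;
  hopp : car -> car;
  hscal : R -> car -> car;
  hinner : car -> car -> R;
  hadd_assoc : forall u v w, hadd u (hadd v w) = hadd (hadd u v) w;
  hadd_comm : forall u v, hadd u v = hadd v u;
  hadd_0 : forall u, hadd hzero u = u;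
  hadd_opp : forall u, hadd (hopp u) u = hzero;
  hscal_assoc : forall a b u, hscal a (hscal b u) = hscal (a * b) u;
  hscal_1 : forall u, hscal 1 u = u;
  hscal_addr : forall a u v, hscal a (hadd u v) = hadd (hscal a u) (hscal a v);
  hscal_addl : forall a b u, hscal (a + b) u = hadd (hscal a u) (hscal b u);
  hinner_sym : forall u v, hinner u v = hinner v u;
  hinner_addl : forall u v w, hinner (hadd u v) w = hinner u w + hinner v w;
  hinner_scall : forall a u v, hinner (hscal a u) v = a * hinner u v;
  hinner_pos : forall u, 0 <= hinner u u;
  hinner_def : forall u, hinner u u = 0 -> u = hzero;
  hcomplete : forall u : nat -> car,
    (forall eps, 0 < eps -> exists N, forall m n, (N <= m)%nat -> (N <= n)%nat ->
        sqrt (hinner (hadd (u m) (hopp (u n))) (hadd (u m) (hopp (u n)))) < eps) ->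
    exists l, forall eps, 0 < eps -> exists N, forall n, (N <= n)%nat ->
        sqrt (hinner (hadd (u n) (hopp l)) (hadd (u n) (hopp l))) < eps
}.

Arguments hzero {h}.
Arguments hadd {h}.
Arguments hopp {h}.
Arguments hscal {h}.
Arguments hinner {h}.

Definition hsub {H : Hilbert} (u v : H) : H := hadd u (hopp v).
Definition nsq {H : Hilbert} (u : H) : R := hinner u u.

(** Points of R^d are represented as functions nat -> R (only the first d
    coordinates matter); Euclidean distance on R^d. *)
Fixpoint sumsq (d : nat) (u : nat -> R) : R :=
  match d with O => 0 | S n => sumsq n u + (u n) ^ 2 end.
Definition dist_d (d : nat) (x x' : nat -> R) : R :=
  sqrt (sumsq d (fun i => x i - x' i)).

(** |s|^a with the convention 0^a = 0 (a > 0). *)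
Definition hpow (s a : R) : R := if Req_EM_T s 0 then 0 else Rpower s a.

Definition constA (alpha L : R) : R :=
  2 * Rpower alpha ((1 - alpha) / (1 + alpha)) * Rpower L (2 / (1 + alpha)) * (1 + alpha).
Definition constB (alpha L : R) : R :=
  Rpower alpha (- (2 * alpha) / (1 + alpha)) * Rpower L (2 / (1 + alpha)) * (1 - alpha ^ 2).

(** Online gradient descent: ogd_aux n = f_{n+1}. *)
Fixpoint ogd_aux {H : Hilbert} (Kx : (nat -> R) -> H) (dphi : R -> R -> R)
  (eta : nat -> R) (xs : nat -> (nat -> R)) (ys : nat -> R) (n : nat) : H :=
  match n with
  | O => hzero
  | S m => let f := ogd_aux Kx dphi eta xs ys m in
      hsub f (hscal (eta (S m) * dphi (ys (S m)) (hinner f (Kx (xs (S m))))) (Kx (xs (S m))))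
  end.
(** f_t for t >= 1 (f_1 = 0, f_{t+1} = f_t - eta_t phi'(y_t, f_t(x_t)) K_{x_t}). *)
Definition ogd {H : Hilbert} Kx dphi eta xs ys (t : nat) : H :=
  ogd_aux (H:=H) Kx dphi eta xs ys (pred t).

Fixpoint sum1 (a : nat -> R) (t : nat) : R :=
  match t with O => 0 | S n => sum1 a n + a (S n) end.
Definition sum0 (a : nat -> R) (t : nat) : R := a O + sum1 a t.

Definition eta0 (eta : nat -> R) (k : nat) : R := match k with O => 1 | _ => eta k end.

(* A Hölder-continuous derivative makes a nonnegative loss self-bounding:
   [phi'(y,s)^2 <= A phi(y,s) + B], by the mean value theorem over a step of length
   [r = 2 |phi'| / A] combined with Young's inequality, whose constants are exactly
   [A] and [B].  Expanding [||f_{t+1} - h||^2] and using that a convex loss lies above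
   its tangent gives
     [||f_{t+1} - h||^2 <= ||f_t - h||^2 + eta_t^2 kappa^2 B
                           + 2 eta_t phi(y_t, h(x_t)) - eta_t phi(y_t, f_t(x_t))],
   the step-size condition absorbing the term [eta_t^2 kappa^2 A phi].  Summing with
   [h = f_H] and [h = 0] gives the two norm bounds; multiplying by [eta_t] and
   telescoping with nonincreasing steps gives the weighted loss bound. *)

From Stdlib Require Import Reals Lra Lia.
Open Scope R_scope.

Lemma Rpower_pos x y : 0 < Rpower x y.
Proof. apply exp_pos. Qed.

Lemma Rpower_weighted_am_gm p X Y : 0 <= p <= 1 -> 0 < X -> 0 < Y ->
  Rpower X p * Rpower Y (1 - p) <= p * X + (1 - p) * Y.
Proof.
  intros Hp HX HY.
  set (m := p * ln X + (1 - p) * ln Y).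
  assert (Hm : Rpower X p * Rpower Y (1 - p) = exp m)
    by (unfold Rpower, m; rewrite <- exp_plus; f_equal; ring).
  assert (tangent : forall u, exp m * (1 + (u - m)) <= exp u).
  { intro u. replace (exp u) with (exp m * exp (u - m))
      by (rewrite <- exp_plus; f_equal; ring).
    apply Rmult_le_compat_l; [left; apply exp_pos | apply exp_ineq1_le]. }
  pose proof (tangent (ln X)) as TX. pose proof (tangent (ln Y)) as TY.
  rewrite exp_ln in TX, TY by assumption.
  rewrite Hm.
  replace (exp m) with (p * (exp m * (1 + (ln X - m))) + (1 - p) * (exp m * (1 + (ln Y - m))))
    by (unfold m; ring).
  nra.
Qed.

Lemma constA_pos a L : 0 < a -> 0 < constA a L.
Proof.
  intro Ha. unfold constA.
  pose proof (Rpower_pos a ((1 - a) / (1 + a))). pose proof (Rpower_pos L (2 / (1 + a))).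
  apply Rmult_lt_0_compat; [|lra]. apply Rmult_lt_0_compat; lra.
Qed.

Lemma constB_nonneg a L : 0 < a <= 1 -> 0 <= constB a L.
Proof.
  intro Ha. unfold constB.
  pose proof (Rpower_pos a (- (2 * a) / (1 + a))). pose proof (Rpower_pos L (2 / (1 + a))).
  apply Rmult_le_pos; nra.
Qed.

Lemma ln_constA a L : 0 < a -> 0 < L -> ln (constA a L) =
  ln 2 + (1 - a) / (1 + a) * ln a + 2 / (1 + a) * ln L + ln (1 + a).
Proof.
  intros Ha HL. unfold constA.
  pose proof (Rpower_pos a ((1 - a) / (1 + a))). pose proof (Rpower_pos L (2 / (1 + a))).
  rewrite !ln_mult by (try apply Rmult_lt_0_compat; try apply Rmult_lt_0_compat; lra).
  rewrite !ln_Rpower. ring.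
Qed.

Lemma ln_constB a L : 0 < a < 1 -> 0 < L -> ln (constB a L) =
  - (2 * a) / (1 + a) * ln a + 2 / (1 + a) * ln L + ln (1 - a) + ln (1 + a).
Proof.
  intros Ha HL. unfold constB.
  pose proof (Rpower_pos a (- (2 * a) / (1 + a))). pose proof (Rpower_pos L (2 / (1 + a))).
  replace (1 - a ^ 2) with ((1 - a) * (1 + a)) by ring.
  rewrite !ln_mult by (try apply Rmult_lt_0_compat; try apply Rmult_lt_0_compat; lra).
  rewrite !ln_Rpower. ring.
Qed.

Lemma constB_pos a L : 0 < a < 1 -> 0 < constB a L.
Proof.
  intro Ha. unfold constB.
  pose proof (Rpower_pos a (- (2 * a) / (1 + a))). pose proof (Rpower_pos L (2 / (1 + a))).
  apply Rmult_lt_0_compat; [apply Rmult_lt_0_compat; lra | nra].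
Qed.

Lemma constA_constB_factorization a L r : 0 < a < 1 -> 0 < L -> 0 < r ->
  constA a L * L * (r * Rpower r a) =
  Rpower (constA a L ^ 2 * r ^ 2 / (2 * (1 + a))) ((1 + a) / 2) *
  Rpower (2 * constB a L / (1 - a)) (1 - (1 + a) / 2).
Proof.
  intros Ha HL Hr.
  pose proof (constA_pos a L (proj1 Ha)) as HA. pose proof (constB_pos a L Ha) as HB.
  pose proof (Rpower_pos r a) as Hra.
  assert (lnX : ln (constA a L ^ 2 * r ^ 2 / (2 * (1 + a))) =
                2 * ln (constA a L) + 2 * ln r - ln 2 - ln (1 + a)).
  { unfold Rdiv. rewrite !ln_mult, ln_Rinv, ln_mult, !ln_pow by
      (try apply Rinv_0_lt_compat; try assumption; try apply Rmult_lt_0_compat;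
       try apply pow_lt; lra).
    simpl INR. ring. }
  assert (lnY : ln (2 * constB a L / (1 - a)) = ln 2 + ln (constB a L) - ln (1 - a)).
  { unfold Rdiv. rewrite !ln_mult, ln_Rinv by
      (try apply Rinv_0_lt_compat; try assumption; try apply Rmult_lt_0_compat; lra).
    ring. }
  unfold Rpower at 2 3. rewrite <- exp_plus, lnX, lnY.
  rewrite <- (exp_ln (constA a L * L * (r * Rpower r a)))
    by (apply Rmult_lt_0_compat; apply Rmult_lt_0_compat; lra).
  f_equal. rewrite !ln_mult, ln_Rpower
    by (try assumption; try apply Rmult_lt_0_compat; lra).
  rewrite ln_constA, ln_constB by lra.
  field. lra.
Qed.

(* Young's inequality with exponents [2 / (1 + a)] and [2 / (1 - a)]: the constants
   [constA] and [constB] are exactly those that make it hold. *)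
Lemma young_constA_constB a L r : 0 < a <= 1 -> 0 < L -> 0 < r ->
  constA a L * L * (r * Rpower r a) <= constA a L ^ 2 * r ^ 2 / 4 + constB a L.
Proof.
  intros Ha HL Hr.
  pose proof (constA_pos a L (proj1 Ha)) as HA.
  destruct (Req_dec a 1) as [-> | Ha1].
  { assert (A1 : constA 1 L = 4 * L).
    { unfold constA. replace ((1 - 1) / (1 + 1)) with 0 by field.
      replace (2 / (1 + 1)) with 1 by field. rewrite Rpower_O, Rpower_1 by lra. ring. }
    assert (B1 : constB 1 L = 0) by (unfold constB; ring).
    rewrite A1, B1, Rpower_1 by lra. nra. }
  assert (Ha' : 0 < a < 1) by lra.
  pose proof (constB_pos a L Ha') as HB.
  rewrite constA_constB_factorization by lra.
  replace (constA a L ^ 2 * r ^ 2 / 4 + constB a L) with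
    ((1 + a) / 2 * (constA a L ^ 2 * r ^ 2 / (2 * (1 + a)))
     + (1 - (1 + a) / 2) * (2 * constB a L / (1 - a))) by (field; lra).
  apply Rpower_weighted_am_gm; [lra | |].
  - apply Rdiv_lt_0_compat; [apply Rmult_lt_0_compat; apply pow_lt|]; lra.
  - apply Rdiv_lt_0_compat; lra.
Qed.

Lemma hpow_le_Rpower u r a : 0 < a -> 0 <= u <= r -> hpow u a <= Rpower r a.
Proof.
  intros Ha Hu. unfold hpow. destruct (Req_EM_T u 0).
  - left; apply Rpower_pos.
  - apply Rle_Rpower_l; lra.
Qed.

Section HolderGradient.

Variables (a L : R).
Hypothesis a_range : 0 < a <= 1.
Hypothesis L_pos : 0 < L.

Definition holder_gradient (g g' : R -> R) : Prop :=
  (forall s, derivable_pt_lim g s (g' s)) /\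
  (forall s s', Rabs (g' s - g' s') <= L * hpow (Rabs (s - s')) a).

(* Mean value theorem on [s - r, s], then [g (s - r) >= 0]. *)
Lemma holder_gradient_step_le g g' s r : 0 < r -> (forall u, 0 <= g u) ->
  holder_gradient g g' -> g' s * r <= g s + L * r * Rpower r a.
Proof.
  intros Hr g_nonneg [g_deriv g'_holder].
  destruct (MVT_cor2 g g' (s - r) s) as [c [Hmvt Hc]]; [lra | intros; apply g_deriv |].
  replace (s - (s - r)) with r in Hmvt by ring.
  assert (Hclose : g' s - g' c <= L * Rpower r a).
  { apply Rle_trans with (L * hpow (Rabs (s - c)) a).
    - eapply Rle_trans; [apply Rle_abs | apply g'_holder].
    - apply Rmult_le_compat_l; [lra|].
      apply hpow_le_Rpower; [lra|]. rewrite Rabs_right; lra. }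
  pose proof (g_nonneg (s - r)). nra.
Qed.

Lemma holder_gradient_mirr g g' :
  holder_gradient g g' -> holder_gradient (mirr_fct g) (fun u => - g' (- u)).
Proof.
  intros [g_deriv g'_holder]. split.
  - intro s. apply derivable_pt_lim_mirr_fwd. rewrite Ropp_involutive. apply g_deriv.
  - intros s s'. replace (- g' (- s) - - g' (- s')) with (g' (- s') - g' (- s)) by ring.
    replace (s - s') with (- s' - - s) by ring. apply g'_holder.
Qed.

Lemma holder_gradient_abs_step_le g g' s r : 0 < r -> (forall u, 0 <= g u) ->
  holder_gradient g g' -> Rabs (g' s) * r <= g s + L * r * Rpower r a.
Proof.
  intros Hr g_nonneg Hg. destruct (Rle_lt_dec 0 (g' s)).
  - rewrite Rabs_right by lra. apply holder_gradient_step_le; assumption.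
  - rewrite Rabs_left by lra.
    pose proof (holder_gradient_step_le (mirr_fct g) (fun u => - g' (- u)) (- s) r Hr)
      as Hmirr.
    unfold mirr_fct in Hmirr. rewrite Ropp_involutive in Hmirr.
    apply Hmirr; [intro; apply g_nonneg | apply holder_gradient_mirr, Hg].
Qed.

(* Choosing the step [r = 2 |g' s| / constA a L] turns the previous bound, via
   Young's inequality, into a bound of the squared gradient by the function value. *)
Lemma holder_gradient_sq_le g g' s : (forall u, 0 <= g u) ->
  holder_gradient g g' -> g' s ^ 2 <= constA a L * g s + constB a L.
Proof.
  intros g_nonneg Hg.
  pose proof (constA_pos a L (proj1 a_range)) as HA.
  pose proof (constB_nonneg a L a_range) as HB.
  pose proof (g_nonneg s) as Hgs.
  destruct (Req_dec (g' s) 0) as [E | Hne].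
  { rewrite E. nra. }
  set (G := Rabs (g' s)).
  assert (HG : 0 < G) by (apply Rabs_pos_lt, Hne).
  set (r := 2 * G / constA a L).
  assert (Hr : 0 < r) by (apply Rdiv_lt_0_compat; lra).
  pose proof (holder_gradient_abs_step_le g g' s r Hr g_nonneg Hg) as Hstep.
  pose proof (young_constA_constB a L r a_range L_pos Hr) as Hyoung.
  assert (E1 : constA a L * (G * r) = 2 * G ^ 2) by (unfold r; field; lra).
  assert (E2 : constA a L ^ 2 * r ^ 2 / 4 = G ^ 2) by (unfold r; field; lra).
  assert (E3 : g' s ^ 2 = G ^ 2) by (unfold G; rewrite pow2_abs; ring).
  fold G in Hstep. nra.
Qed.

End HolderGradient.

Definition convex (g : R -> R) : Prop :=
  forall u v l, 0 <= l <= 1 -> g (l * u + (1 - l) * v) <= l * g u + (1 - l) * g v.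

Lemma convex_chord_slope_le g s s' l : convex g -> 0 < l <= 1 -> s' <> s ->
  (g (s + l * (s' - s)) - g s) / (l * (s' - s)) * (s' - s) <= g s' - g s.
Proof.
  intros g_convex Hl Hs. pose proof (g_convex s' s l ltac:(lra)) as Hc.
  replace (l * s' + (1 - l) * s) with (s + l * (s' - s)) in Hc by ring.
  replace ((g (s + l * (s' - s)) - g s) / (l * (s' - s)) * (s' - s))
    with ((g (s + l * (s' - s)) - g s) / l) by (field; lra).
  apply Rmult_le_reg_l with l; [lra|].
  replace (l * ((g (s + l * (s' - s)) - g s) / l)) with (g (s + l * (s' - s)) - g s)
    by (field; lra).
  lra.
Qed.

(* The chord slopes from [s] towards [s'] tend to [g's]; a positive gap between
   [g's * (s' - s)] and [g s' - g s] would survive for chords short enough. *)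
Lemma convex_derivable_tangent_le g g's s s' :
  convex g -> derivable_pt_lim g s g's -> g s + g's * (s' - s) <= g s'.
Proof.
  intros g_convex g_deriv.
  destruct (Req_dec s' s) as [-> | Hs]; [lra|].
  set (d := s' - s).
  assert (Hd0 : d <> 0) by (unfold d; lra).
  assert (Hd : 0 < Rabs d) by (apply Rabs_pos_lt, Hd0).
  apply Rnot_lt_le; intro Hlt.
  set (gap := g's * d - (g s' - g s)).
  assert (Hgap : 0 < gap) by (unfold gap; lra).
  destruct (g_deriv (gap / (2 * Rabs d))) as [delta Hdelta]; [apply Rdiv_lt_0_compat; lra|].
  pose proof (cond_pos delta) as Hdelta_pos.
  set (l := Rmin 1 (delta / (2 * Rabs d))).
  assert (Hl : 0 < l <= 1).
  { split; [| apply Rmin_l]. apply Rmin_glb_lt; [lra | apply Rdiv_lt_0_compat; lra]. }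
  assert (Hld : Rabs (l * d) < delta).
  { rewrite Rabs_mult, (Rabs_right l) by lra.
    pose proof (Rmin_r 1 (delta / (2 * Rabs d))) as Hl'. fold l in Hl'.
    apply Rmult_le_compat_r with (r := Rabs d) in Hl'; [|lra].
    replace (delta / (2 * Rabs d) * Rabs d) with (delta / 2) in Hl' by (field; lra).
    lra. }
  specialize (Hdelta (l * d) ltac:(apply Rmult_integral_contrapositive; split; lra) Hld).
  pose proof (convex_chord_slope_le g s s' l g_convex Hl Hs) as Hchord. fold d in Hchord.
  set (q := (g (s + l * d) - g s) / (l * d)) in *.
  assert (Hq : Rabs ((q - g's) * d) <= gap / 2).
  { rewrite Rabs_mult.
    replace (gap / 2) with (gap / (2 * Rabs d) * Rabs d) by (field; lra).
    apply Rmult_le_compat_r; lra. }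
  pose proof (Rle_abs (- ((q - g's) * d))) as Habs. rewrite Rabs_Ropp in Habs.
  unfold gap in Hq. lra.
Qed.

Section HilbertAlgebra.

Variable H : Hilbert.
Implicit Types u v w : H.

Lemma hinner_0l v : hinner hzero v = 0.
Proof. pose proof (hinner_addl H hzero hzero v) as E. rewrite hadd_0 in E. lra. Qed.

Lemma hinner_0r v : hinner v hzero = 0.
Proof. rewrite hinner_sym. apply hinner_0l. Qed.

Lemma hinner_oppl u v : hinner (hopp u) v = - hinner u v.
Proof.
  pose proof (hinner_addl H (hopp u) u v) as E. rewrite hadd_opp, hinner_0l in E. lra.
Qed.

Lemma hinner_subl u v w : hinner (hsub u v) w = hinner u w - hinner v w.
Proof. unfold hsub. rewrite hinner_addl, hinner_oppl. ring. Qed.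

Lemma hinner_subr u v w : hinner w (hsub u v) = hinner w u - hinner w v.
Proof. rewrite !(hinner_sym _ w). apply hinner_subl. Qed.

Lemma hinner_scalr a u v : hinner v (hscal a u) = a * hinner v u.
Proof. rewrite !(hinner_sym _ v). apply hinner_scall. Qed.

Lemma nsq_nonneg u : 0 <= nsq u.
Proof. apply hinner_pos. Qed.

Lemma nsq_le_of_sqrt_le u k : sqrt (nsq u) <= k -> nsq u <= k ^ 2.
Proof.
  intro Hk. pose proof (nsq_nonneg u). pose proof (sqrt_pos (nsq u)).
  rewrite <- (sqrt_sqrt (nsq u)) by assumption. nra.
Qed.

Lemma nsq_0 : nsq (@hzero H) = 0.
Proof. apply hinner_0l. Qed.

Lemma nsq_sub0 u : nsq (hsub u hzero) = nsq u.
Proof. unfold nsq. rewrite !hinner_subl, !hinner_subr, !hinner_0l, !hinner_0r. ring. Qed.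

Lemma nsq_0sub u : nsq (hsub hzero u) = nsq u.
Proof. unfold nsq. rewrite !hinner_subl, !hinner_subr, !hinner_0l, !hinner_0r. ring. Qed.

Lemma nsq_sub_scal_sub u v w c :
  nsq (hsub (hsub u (hscal c w)) v) =
  nsq (hsub u v) - 2 * c * (hinner u w - hinner v w) + c ^ 2 * nsq w.
Proof.
  unfold nsq. rewrite !hinner_subl, !hinner_subr, !hinner_scall, !hinner_scalr.
  rewrite (hinner_sym _ w u), (hinner_sym _ v u), (hinner_sym _ w v). ring.
Qed.

End HilbertAlgebra.

Lemma nsq_gradient_step_le (H : Hilbert) (u v w : H) (g : R -> R) g'u eta kap2 A B :
  (forall s, 0 <= g s) -> convex g -> derivable_pt_lim g (hinner u w) g'u ->
  g'u ^ 2 <= A * g (hinner u w) + B -> nsq w <= kap2 ->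
  A * kap2 * eta <= 1 -> 0 < eta -> 0 <= B ->
  nsq (hsub (hsub u (hscal (eta * g'u) w)) v) <=
  nsq (hsub u v) + eta ^ 2 * kap2 * B + 2 * eta * g (hinner v w) - eta * g (hinner u w).
Proof.
  intros g_nonneg g_convex g_deriv g'_sq w_le eta_small eta_pos B_nonneg.
  rewrite nsq_sub_scal_sub.
  pose proof (convex_derivable_tangent_le g g'u (hinner u w) (hinner v w) g_convex g_deriv)
    as Htangent.
  pose proof (nsq_nonneg H w) as Hw.
  set (gu := g (hinner u w)) in *. pose proof (g_nonneg (hinner u w)) as Hgu. fold gu in Hgu.
  assert (Hlin : - 2 * (eta * g'u) * (hinner u w - hinner v w)
                 <= 2 * eta * (g (hinner v w) - gu))
    by nra.
  assert (Hquad : (eta * g'u) ^ 2 * nsq w <= eta ^ 2 * ((A * gu + B) * kap2)).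
  { replace ((eta * g'u) ^ 2 * nsq w) with (eta ^ 2 * (g'u ^ 2 * nsq w)) by ring.
    apply Rmult_le_compat_l; [nra|].
    apply Rle_trans with (g'u ^ 2 * kap2); [apply Rmult_le_compat_l; nra|].
    apply Rmult_le_compat_r; lra. }
  assert (Hsmall : eta ^ 2 * (A * gu * kap2) <= eta * gu).
  { replace (eta ^ 2 * (A * gu * kap2)) with ((A * kap2 * eta) * (eta * gu)) by ring.
    assert (0 <= eta * gu) by nra. nra. }
  nra.
Qed.

Lemma sum1_eta0 a t : sum1 (eta0 a) t = sum1 a t.
Proof. induction t as [|t IH]; simpl; [reflexivity | now rewrite IH]. Qed.

Section OnlineGradientDescent.

Variables (H : Hilbert) (Kx : (nat -> R) -> H) (phi dphi : R -> R -> R).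
Variables (eta : nat -> R) (xs : nat -> (nat -> R)) (ys : nat -> R) (A B kap2 : R).
Hypothesis A_pos : 0 < A.
Hypothesis B_nonneg : 0 <= B.
Hypothesis phi_nonneg : forall k s, (1 <= k)%nat -> 0 <= phi (ys k) s.
Hypothesis phi_convex : forall k, (1 <= k)%nat -> convex (phi (ys k)).
Hypothesis phi_deriv :
  forall k s, (1 <= k)%nat -> derivable_pt_lim (phi (ys k)) s (dphi (ys k) s).
Hypothesis dphi_sq_le : forall k s, (1 <= k)%nat -> dphi (ys k) s ^ 2 <= A * phi (ys k) s + B.
Hypothesis Kx_nsq_le : forall k, (1 <= k)%nat -> nsq (Kx (xs k)) <= kap2.
Hypothesis eta_pos : forall k, (1 <= k)%nat -> 0 < eta k.
Hypothesis eta_small : forall k, (1 <= k)%nat -> A * kap2 * eta k <= 1.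

Local Notation f := (ogd_aux Kx dphi eta xs ys).
Local Notation loss k u := (phi (ys k) (hinner u (Kx (xs k)))).

Lemma ogd_step_le t h :
  nsq (hsub (f (S t)) h) <=
  nsq (hsub (f t) h) + eta (S t) ^ 2 * kap2 * B + 2 * eta (S t) * loss (S t) h
  - eta (S t) * loss (S t) (f t).
Proof.
  assert (Ht : (1 <= S t)%nat) by lia.
  apply nsq_gradient_step_le with (A := A); auto.
Qed.

Lemma ogd_step_noise_le t : eta (S t) ^ 2 * kap2 * B <= eta (S t) * (B / A).
Proof.
  pose proof (eta_small (S t) ltac:(lia)). pose proof (eta_pos (S t) ltac:(lia)).
  replace (eta (S t) * (B / A))
    with (eta (S t) ^ 2 * kap2 * B + eta (S t) * B * (1 - A * kap2 * eta (S t)) / A)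
    by (field; lra).
  assert (0 <= eta (S t) * B * (1 - A * kap2 * eta (S t)) / A)
    by (apply Rmult_le_pos; [apply Rmult_le_pos; nra | left; apply Rinv_0_lt_compat, A_pos]).
  lra.
Qed.

Lemma kap2_nonneg : 0 <= kap2.
Proof.
  pose proof (Kx_nsq_le 1%nat (le_n 1)). pose proof (nsq_nonneg H (Kx (xs 1%nat))). lra.
Qed.

Lemma sum1_eta_nonneg t : 0 <= sum1 eta t.
Proof.
  induction t as [|t IH]; simpl; [lra|]. pose proof (eta_pos (S t) ltac:(lia)). lra.
Qed.

Section Comparator.

Variables (h : H) (M : R).
Hypothesis loss_h_le : forall k, (1 <= k)%nat -> loss k h <= M.

Lemma ogd_dist_le t : nsq (hsub (f t) h) <= nsq h + (B / A + 2 * M) * sum1 eta t.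
Proof.
  induction t as [|t IH].
  - simpl. rewrite nsq_0sub. lra.
  - pose proof (ogd_step_le t h). pose proof (ogd_step_noise_le t).
    pose proof (loss_h_le (S t) ltac:(lia)).
    pose proof (phi_nonneg (S t) (hinner (f t) (Kx (xs (S t)))) ltac:(lia)).
    pose proof (eta_pos (S t) ltac:(lia)).
    simpl sum1. nra.
Qed.

Lemma ogd_dist_le_sum0 t : 0 <= M ->
  nsq (hsub (f t) h) <= (nsq h + B / A + 2 * M) * sum0 (eta0 eta) t.
Proof.
  intro M_nonneg. unfold sum0. rewrite sum1_eta0. simpl eta0.
  pose proof (ogd_dist_le t). pose proof (sum1_eta_nonneg t). pose proof (nsq_nonneg H h).
  assert (0 <= B / A) by (apply Rmult_le_pos; [lra | left; apply Rinv_0_lt_compat, A_pos]).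
  nra.
Qed.

Section NonincreasingSteps.

Hypothesis eta_noninc : forall t, (1 <= t)%nat -> eta (S t) <= eta t.

Lemma eta_le_eta1 k : (1 <= k)%nat -> eta k <= eta 1%nat.
Proof.
  induction 1 as [|k Hk IH]; [lra|]. pose proof (eta_noninc k Hk). lra.
Qed.

(* Multiplying the step inequality by [eta_{t+1}] and using [eta_{t+2} <= eta_{t+1}]
   makes the weighted distances telescope. *)
Lemma ogd_weighted_loss_potential_le t :
  sum1 (fun k => eta k ^ 2 * loss k (ogd Kx dphi eta xs ys k)) t
  + eta (S t) * nsq (hsub (f t) h)
  <= eta 1%nat * nsq h + (2 * M + eta 1%nat * kap2 * B) * sum1 (fun k => eta k ^ 2) t.
Proof.
  induction t as [|t IH].
  - simpl. rewrite nsq_0sub. lra.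
  - cbn [sum1]. change (ogd Kx dphi eta xs ys (S t)) with (f t).
    pose proof (ogd_step_le t h) as Hstep.
    pose proof (loss_h_le (S t) ltac:(lia)) as Hh.
    pose proof (eta_pos (S t) ltac:(lia)) as He.
    pose proof (eta_noninc (S t) ltac:(lia)) as Hdec.
    pose proof (eta_le_eta1 (S t) ltac:(lia)) as He1.
    pose proof (nsq_nonneg H (hsub (f (S t)) h)) as HD.
    set (e := eta (S t)) in *.
    pose proof kap2_nonneg.
    assert (Hnoise : e * (e ^ 2 * kap2 * B) <= e ^ 2 * (eta 1%nat * kap2 * B)).
    { replace (e * (e ^ 2 * kap2 * B)) with (e ^ 2 * (e * (kap2 * B))) by ring.
      replace (eta 1%nat * kap2 * B) with (eta 1%nat * (kap2 * B)) by ring.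
      apply Rmult_le_compat_l; [nra|]. apply Rmult_le_compat_r; [nra | assumption]. }
    assert (Hloss : e * (e * loss (S t) (f t)) <=
                    e * (nsq (hsub (f t) h) - nsq (hsub (f (S t)) h)
                         + e ^ 2 * kap2 * B + 2 * e * M)).
    { apply Rmult_le_compat_l; nra. }
    assert (Hdist : eta (S (S t)) * nsq (hsub (f (S t)) h) <= e * nsq (hsub (f (S t)) h))
      by (apply Rmult_le_compat_r; lra).
    nra.
Qed.

Lemma ogd_weighted_loss_le t :
  sum1 (fun k => eta k ^ 2 * loss k (ogd Kx dphi eta xs ys k)) t
  <= eta 1%nat * nsq h + (2 * M + eta 1%nat * kap2 * B) * sum1 (fun k => eta k ^ 2) t.
Proof.
  pose proof (ogd_weighted_loss_potential_le t).
  pose proof (eta_pos (S t) ltac:(lia)). pose proof (nsq_nonneg H (hsub (f t) h)).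
  nra.
Qed.

End NonincreasingSteps.

End Comparator.

Lemma ogd_nsq_le M : (forall k, (1 <= k)%nat -> phi (ys k) 0 <= M) ->
  forall t, nsq (f t) <= (B / A + 2 * M) * sum1 eta t.
Proof.
  intros loss_0_le t. rewrite <- nsq_sub0, <- (Rplus_0_l (_ * _)), <- (nsq_0 H).
  apply ogd_dist_le. intros k Hk. rewrite hinner_0l. auto.
Qed.

End OnlineGradientDescent.

Theorem lemma8
  (d : nat) (Xs : (nat -> R) -> Prop) (Ys : R -> Prop)
  (H : Hilbert) (K : (nat -> R) -> (nat -> R) -> R) (Kx : (nat -> R) -> H)
  (HK : forall x x', Xs x -> Xs x' -> K x x' = hinner (Kx x) (Kx x'))
  (Hrkhs : forall f : H, (forall x, Xs x -> hinner f (Kx x) = 0) -> f = hzero)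
  (Kcont : forall x x', Xs x -> Xs x' -> forall eps, 0 < eps -> exists delta, 0 < delta /\
       forall u u', Xs u -> Xs u' -> dist_d d u x < delta -> dist_d d u' x' < delta ->
         Rabs (K u u' - K x x') < eps)
  (kappa : R) (Hkappa : is_lub (fun r => exists x, Xs x /\ r = sqrt (K x x)) kappa)
  (phi dphi : R -> R -> R)
  (phi_nonneg : forall y s, Ys y -> 0 <= phi y s)
  (phi_deriv : forall y s, Ys y -> derivable_pt_lim (phi y) s (dphi y s))
  (phi_convex : forall y s s' l, Ys y -> 0 <= l <= 1 ->
       phi y (l * s + (1 - l) * s') <= l * phi y s + (1 - l) * phi y s')
  (alpha L : R) (Halpha : 0 < alpha <= 1) (HL : 0 < L)
  (phi_holder : forall y s s', Ys y ->
       Rabs (dphi y s - dphi y s') <= L * hpow (Rabs (s - s')) alpha)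
  (fH : H)
  (S0 S1 : R)
  (HS0 : is_lub (fun r => exists y, Ys y /\ r = phi y 0) S0)
  (HS1 : is_lub (fun r => exists x y, Xs x /\ Ys y /\ r = phi y (hinner fH (Kx x))) S1)
  (xs : nat -> (nat -> R)) (ys : nat -> R)
  (Hxs : forall t, (1 <= t)%nat -> Xs (xs t)) (Hys : forall t, (1 <= t)%nat -> Ys (ys t))
  (eta : nat -> R) (eta_pos : forall t, (1 <= t)%nat -> 0 < eta t)
  (eta_small : forall t, (1 <= t)%nat -> constA alpha L * kappa ^ 2 * eta t <= 1) :
  let f := ogd Kx dphi eta xs ys in
  let C1 := nsq fH + constB alpha L / constA alpha L + 2 * Rmax S0 S1 in
  let C2 := 2 * S1 + eta 1%nat * kappa ^ 2 * constB alpha L in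
  (forall t, (1 <= t)%nat ->
     nsq (hsub (f (S t)) fH) <= C1 * sum0 (eta0 eta) t /\
     nsq (f (S t)) <= C1 * sum1 eta t) /\
  ((forall t, (1 <= t)%nat -> eta (S t) <= eta t) ->
   forall t, (1 <= t)%nat ->
     sum1 (fun k => eta k ^ 2 * phi (ys k) (hinner (f k) (Kx (xs k)))) t
       <= eta 1%nat * nsq fH + C2 * sum1 (fun k => eta k ^ 2) t).
Proof.
  intros f C1 C2.
  pose proof (constA_pos alpha L (proj1 Halpha)) as HA.
  pose proof (constB_nonneg alpha L Halpha) as HB.
  assert (loss_fH_le : forall k, (1 <= k)%nat -> phi (ys k) (hinner fH (Kx (xs k))) <= S1)
    by (intros k Hk; apply (proj1 HS1); exists (xs k), (ys k); auto).
  assert (loss_0_le : forall k, (1 <= k)%nat -> phi (ys k) 0 <= S0)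
    by (intros k Hk; apply (proj1 HS0); exists (ys k); auto).
  assert (S0_nonneg : 0 <= S0).
  { pose proof (phi_nonneg _ 0 (Hys 1%nat (le_n 1))). pose proof (loss_0_le 1%nat (le_n 1)).
    lra. }
  assert (Kxs_nsq_le : forall k, (1 <= k)%nat -> nsq (Kx (xs k)) <= kappa ^ 2).
  { intros k Hk. apply nsq_le_of_sqrt_le. unfold nsq. rewrite <- HK by auto.
    apply (proj1 Hkappa). exists (xs k). auto. }
  assert (loss_convex : forall k, (1 <= k)%nat -> convex (phi (ys k)))
    by (intros k Hk u v l Hl; auto).
  assert (dloss_sq_le : forall k s, (1 <= k)%nat ->
            dphi (ys k) s ^ 2 <= constA alpha L * phi (ys k) s + constB alpha L).
  { intros k s Hk. apply (holder_gradient_sq_le alpha L); auto. split; auto. }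
  pose proof (Rmax_l S0 S1). pose proof (Rmax_r S0 S1).
  split.
  - intros t _. change (f (S t)) with (ogd_aux Kx dphi eta xs ys t). split.
    + apply (ogd_dist_le_sum0 H Kx phi dphi eta xs ys) with (kap2 := kappa ^ 2); [..| lra].
      all: auto. intros k Hk. apply Rle_trans with S1; auto.
    + apply Rle_trans with ((constB alpha L / constA alpha L + 2 * S0) * sum1 eta t).
      * apply (ogd_nsq_le H Kx phi dphi eta xs ys) with (kap2 := kappa ^ 2); auto.
      * apply Rmult_le_compat_r; [apply (sum1_eta_nonneg eta); auto|].
        pose proof (nsq_nonneg H fH). unfold C1. lra.
  - intros eta_noninc t _.
    apply (ogd_weighted_loss_le H Kx phi dphi eta xs ys (constA alpha L)); auto.
Qed.
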